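(* Let $r>1$ and let $n$ be a positive integer. Then $$C_{r^n}(1)\le \frac1n\cdot\frac{r}{r-1}.$$
   Context: For $s>1$, $\mathcal A_s=\{w\in\mathbb C: 1/s<|w|<s\}$. $C_s(1)$ denotes Carathéodory's infinitesimal metric of $\mathcal A_s$ at the point $1$ evaluated on the tangent vector $1$ (identifying tangent spaces with $\mathbb C$), i.e. $C_s(1)=\sup\{|g'(1)|: g:\mathcal A_s\to\Delta \text{ holomorphic},\ g(1)=0\}$, $\Delta$ the unit disc. *)

From Stdlib Require Import Reals.
From Coquelicot Require Import Coquelicot.
Open Scope R_scope.

Definition annulus (s : R) (w : C) : Prop := / s < Cmod w < s.

Definition unit_disc (w : C) : Prop := Cmod w < 1.

Definition holomorphic_on (U : C -> Prop) (g : C -> C) : Prop :=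
  forall z, U z -> ex_derive (K := C_AbsRing) g z.

Definition carath_values (s : R) (x : R) : Prop :=
  exists (g : C -> C) (d : C),
    holomorphic_on (annulus s) g /\
    (forall z, annulus s z -> unit_disc (g z)) /\
    g (RtoC 1) = RtoC 0 /\
    is_derive (K := C_AbsRing) g (RtoC 1) d /\
    x = Cmod d.

(* C_s(1) = sup { |g'(1)| : g : A_s -> Delta holomorphic, g(1) = 0 } (in Rbar). *)
Definition carath (s : R) : Rbar := Lub_Rbar (carath_values s).

(* Put rho = 1 - 1/r. Since 1/r < |1 + rho w| < r on the unit disc, P(w) = (1 + rho w)^n maps the
   disc into A_{r^n}, with P(0) = 1 and P'(0) = n rho. For g : A_{r^n} -> Delta with g(1) = 0, the map
   F = g o P is a holomorphic self-map of the disc fixing 0, so Schwarz's bound |F'(0)| <= 1 gives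
   n rho |g'(1)| <= 1, i.e. |g'(1)| <= r / (n (r - 1)).

   Schwarz's bound is obtained without the maximum principle: the Cauchy estimate on a square inside
   the disc bounds |(F^k)'(0)| = |F'(0)|^k uniformly in k. The Cauchy estimate |f'(0)| <= 2 M / S
   for f(0) = 0 comes from the contour integral of f(w)/w^2 = f'(0)/w + o(1/|w|) over the square
   [-S,S]^2, which by Goursat's theorem (proved by bisection) equals its integral over arbitrarily
   small concentric squares. *)

From Stdlib Require Import Reals Lra Lia.
From Coquelicot Require Import Coquelicot.
Open Scope R_scope.

Local Notation CRInt := (@RInt C_R_CompleteNormedModule).
Local Notation ex_CRInt := (ex_RInt (V := C_R_CompleteNormedModule)).
Local Notation is_CRInt := (@is_RInt C_R_NormedModule).
Local Notation is_Cderive := (@is_derive C_AbsRing C_NormedModule).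
Local Notation ex_Cderive := (@ex_derive C_AbsRing C_NormedModule).

(** * Complex derivatives *)

Lemma is_Cderive_AbsRing (f : C -> C) (z l : C) :
  is_Cderive f z l <->
  @is_derive C_AbsRing (AbsRing_NormedModule C_AbsRing) f z l.
Proof. split; intros [_ H]; (split; [apply is_linear_scal_l | exact H]). Qed.

Lemma is_Cderive_eps (f : C -> C) (z l : C) :
  is_Cderive f z l <->
  forall eps, 0 < eps -> exists del, 0 < del /\ forall w, Cmod (w - z) < del ->
    Cmod (f w - f z - l * (w - z)) <= eps * Cmod (w - z).
Proof.
  split.
  - intros [_ H] eps Heps.
    destruct (H z (fun P HP => HP) (mkposreal eps Heps)) as [del Hdel].
    exists del; split; [apply cond_pos|]. intros w Hw.
    replace (f w - f z - l * (w - z))%C with (f w - f z - (w - z) * l)%C by ring.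
    exact (Hdel w Hw).
  - intros H. split; [apply is_linear_scal_l|].
    intros x Hx. apply (@is_filter_lim_locally_unique _ (AbsRing_NormedModule C_AbsRing)) in Hx.
    subst x. intros eps. destruct (H eps (cond_pos eps)) as [del [Hdel H']].
    exists (mkposreal del Hdel). intros w Hw.
    change (Cmod (f w - f z - (w - z) * l) <= eps * Cmod (w - z)).
    replace (f w - f z - (w - z) * l)%C with (f w - f z - l * (w - z))%C by ring.
    exact (H' w Hw).
Qed.

Lemma is_derive_Cmult (f g : C -> C) (z df dg : C) :
  is_Cderive f z df -> is_Cderive g z dg ->
  is_Cderive (fun w => f w * g w)%C z (df * g z + f z * dg)%C.
Proof.
  intros Hf Hg. apply is_Cderive_AbsRing.
  apply (is_derive_mult f g); [apply is_Cderive_AbsRing; assumption .. | exact Cmult_comm].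
Qed.

Lemma is_derive_Ccomp (f g : C -> C) (z df dg : C) :
  is_Cderive f (g z) df -> is_Cderive g z dg ->
  is_Cderive (fun w => f (g w)) z (dg * df)%C.
Proof. intros Hf Hg. exact (is_derive_comp f g z df dg Hf (proj1 (is_Cderive_AbsRing _ _ _) Hg)). Qed.

Lemma is_derive_Caffine (a b z : C) : is_Cderive (fun w => a + b * w)%C z b.
Proof.
  apply is_Cderive_eps. intros eps Heps. exists 1. split; [lra|]. intros w _.
  replace (a + b * w - (a + b * z) - b * (w - z))%C with (RtoC 0) by ring.
  rewrite Cmod_0. assert (0 <= Cmod (w - z)) by apply Cmod_ge_0. nra.
Qed.

Lemma is_derive_Cid (z : C) : is_Cderive (fun w => w) z (RtoC 1).
Proof.
  apply (is_derive_ext (fun w => 0 + 1 * w)%C); [|apply is_derive_Caffine].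
  intros w. change (0 + 1 * w = w)%C. ring.
Qed.

Lemma is_derive_Cpow_S (n : nat) (z : C) :
  is_Cderive (fun w => w ^ S n)%C z (INR (S n) * z ^ n)%C.
Proof.
  induction n as [|n IH].
  - apply (is_derive_ext (V := C_NormedModule) (fun w => w));
      [intros w; change (w = w * 1)%C; now rewrite Cmult_1_r |].
    replace (INR 1 * z ^ 0)%C with (RtoC 1) by (simpl; ring). apply is_derive_Cid.
  - replace (INR (S (S n)) * z ^ S n)%C with (1 * z ^ S n + z * (INR (S n) * z ^ n))%C
      by (rewrite (S_INR (S n)), RtoC_plus; simpl; ring).
    exact (is_derive_Cmult (fun w => w) (fun w => w ^ S n)%C z _ _ (is_derive_Cid z) IH).
Qed.

Lemma is_derive_Cinv (z : C) : z <> 0%C ->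
  is_Cderive (fun w => / w)%C z (- (/ z * / z))%C.
Proof.
  intros Hz. apply is_Cderive_eps. intros eps Heps.
  assert (Hc : 0 < Cmod z) by (apply Cmod_gt_0; exact Hz).
  exists (Rmin (Cmod z / 2) (eps * Cmod z ^ 3 / 2)). split.
  { apply Rmin_pos; [lra|]. assert (0 < Cmod z ^ 3) by (apply pow_lt; lra). nra. }
  intros w Hw.
  pose proof (Rmin_l (Cmod z / 2) (eps * Cmod z ^ 3 / 2)).
  pose proof (Rmin_r (Cmod z / 2) (eps * Cmod z ^ 3 / 2)).
  assert (Hw1 : Cmod (w - z) <= Cmod z / 2) by lra.
  assert (Hw2 : Cmod (w - z) <= eps * Cmod z ^ 3 / 2) by lra.
  assert (Hwz : Cmod z / 2 <= Cmod w).
  { assert (T := Cmod_triangle w (z - w)). replace (w + (z - w))%C with z in T by ring.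
    replace (z - w)%C with (- (w - z))%C in T by ring. rewrite Cmod_opp in T. lra. }
  assert (Hw0 : w <> 0%C) by (apply Cmod_gt_0; lra).
  replace (/ w - / z - - (/ z * / z) * (w - z))%C with ((w - z) * ((w - z) * (/ w * / z * / z)))%C
    by (field; auto).
  rewrite Cmod_mult, (Rmult_comm eps). apply Rmult_le_compat_l; [apply Cmod_ge_0|].
  rewrite !Cmod_mult, !Cmod_inv by auto.
  apply Rle_trans with (eps * Cmod z ^ 3 / 2 * (/ (Cmod z / 2) * / Cmod z * / Cmod z)).
  - apply Rmult_le_compat; try apply Cmod_ge_0; auto.
    + assert (0 < / Cmod w) by (apply Rinv_0_lt_compat; lra).
      assert (0 < / Cmod z) by (apply Rinv_0_lt_compat; lra). nra.
    + apply Rmult_le_compat_r; [left; apply Rinv_0_lt_compat; lra|].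
      apply Rmult_le_compat_r; [left; apply Rinv_0_lt_compat; lra|].
      apply Rinv_le_contravar; lra.
  - right. field. lra.
Qed.

(** * Contour integrals over rectangles *)

Lemma Cmod_pair_le (x y : R) : Cmod (x, y) <= Rabs x + Rabs y.
Proof.
  replace ((x, y) : C) with (RtoC x + Ci * RtoC y)%C
    by (unfold RtoC, Ci, Cplus, Cmult; simpl; f_equal; ring).
  eapply Rle_trans; [apply Cmod_triangle|]. rewrite Cmod_mult, Cmod_Ci, !Cmod_R. lra.
Qed.

Lemma continuous_comp_isometry (f : C -> C) (p : R -> C) (t : R) :
  (forall s, Cmod (p s - p t) = Rabs (s - t)) -> ex_Cderive f (p t) ->
  @continuous R_UniformSpace C_R_CompleteNormedModule (fun s => f (p s)) t.
Proof.
  intros Hp Hf. apply (continuous_comp (V := AbsRing_UniformSpace C_AbsRing) p f).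
  - apply filterlim_locally. intros eps. exists eps. intros s Hs.
    change (Cmod (p s - p t) < eps). rewrite Hp. exact Hs.
  - exact (ex_derive_continuous f (p t) Hf).
Qed.

Lemma ex_CRInt_horiz (f : C -> C) (y a b : R) : a <= b ->
  (forall x, a <= x <= b -> ex_Cderive f (x, y)) -> ex_CRInt (fun x => f (x, y)) a b.
Proof.
  intros Hab Hf. apply ex_RInt_continuous. intros x Hx.
  rewrite Rmin_left, Rmax_right in Hx by lra.
  apply (continuous_comp_isometry f (fun s => (s, y))); [|apply Hf; lra].
  intros s. rewrite <- Cmod_R. f_equal. unfold RtoC, Cminus, Cplus, Copp. simpl. f_equal; ring.
Qed.

Lemma ex_CRInt_vert (f : C -> C) (x a b : R) : a <= b ->
  (forall y, a <= y <= b -> ex_Cderive f (x, y)) -> ex_CRInt (fun y => f (x, y)) a b.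
Proof.
  intros Hab Hf. apply ex_RInt_continuous. intros y Hy.
  rewrite Rmin_left, Rmax_right in Hy by lra.
  apply (continuous_comp_isometry f (fun s => (x, s))); [|apply Hf; lra].
  intros s. rewrite <- (Rmult_1_l (Rabs _)), <- Cmod_Ci, <- Cmod_R, <- Cmod_mult. f_equal.
  unfold RtoC, Ci, Cminus, Cplus, Copp, Cmult. simpl. f_equal; ring.
Qed.

Lemma is_CRInt_Cmult (g : R -> C) (a b : R) (I c : C) :
  is_CRInt g a b I -> is_CRInt (fun t => c * g t)%C a b (c * I)%C.
Proof.
  intros H.
  assert (H1 := is_RInt_fct_extend_fst (U := R_NormedModule) (V := R_NormedModule) _ _ _ _ H).
  assert (H2 := is_RInt_fct_extend_snd (U := R_NormedModule) (V := R_NormedModule) _ _ _ _ H).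
  destruct c as [c1 c2]. apply (is_RInt_fct_extend_pair (U := R_NormedModule) (V := R_NormedModule)).
  - exact (is_RInt_minus _ _ _ _ _ _ (is_RInt_scal _ _ _ c1 _ H1) (is_RInt_scal _ _ _ c2 _ H2)).
  - exact (is_RInt_plus _ _ _ _ _ _ (is_RInt_scal _ _ _ c1 _ H2) (is_RInt_scal _ _ _ c2 _ H1)).
Qed.

Lemma CRInt_Cminus (f g : R -> C) (a b : R) : ex_CRInt f a b -> ex_CRInt g a b ->
  CRInt (fun t => f t - g t)%C a b = (CRInt f a b - CRInt g a b)%C.
Proof.
  intros Hf Hg. apply is_RInt_unique.
  exact (is_RInt_minus _ _ _ _ _ _ (RInt_correct _ _ _ Hf) (RInt_correct _ _ _ Hg)).
Qed.

Lemma CRInt_Cmult (f : R -> C) (c : C) (a b : R) : ex_CRInt f a b ->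
  CRInt (fun t => c * f t)%C a b = (c * CRInt f a b)%C.
Proof. intros Hf. apply is_RInt_unique. exact (is_CRInt_Cmult _ _ _ _ c (RInt_correct _ _ _ Hf)). Qed.

Lemma CRInt_Chasles (f : R -> C) (a m b : R) : a <= m <= b -> ex_CRInt f a b ->
  CRInt f a b = (CRInt f a m + CRInt f m b)%C.
Proof.
  intros Hm Hf. symmetry. apply (RInt_Chasles (V := C_R_CompleteNormedModule)).
  - exact (ex_RInt_Chasles_1 (V := C_R_CompleteNormedModule) f a m b Hm Hf).
  - exact (ex_RInt_Chasles_2 (V := C_R_CompleteNormedModule) f a m b Hm Hf).
Qed.

Lemma CRInt_Cmod_le (f : R -> C) (a b M : R) : a <= b -> ex_CRInt f a b ->
  (forall t, a <= t <= b -> Cmod (f t) <= M) -> Cmod (CRInt f a b) <= (b - a) * M.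
Proof.
  intros Hab Hf HM. rewrite Cmod_norm.
  apply (norm_RInt_le_const f a b); [exact Hab | | exact (RInt_correct _ _ _ Hf)].
  intros t Ht. rewrite <- Cmod_norm. exact (HM t Ht).
Qed.

Record rect := Rect { xlo : R; xhi : R; ylo : R; yhi : R }.

Definition rect_wf (Q : rect) : Prop := xlo Q <= xhi Q /\ ylo Q <= yhi Q.

Definition in_rect (Q : rect) (w : C) : Prop :=
  xlo Q <= fst w <= xhi Q /\ ylo Q <= snd w <= yhi Q.

Definition on_rect_boundary (Q : rect) (w : C) : Prop :=
  in_rect Q w /\ (fst w = xlo Q \/ fst w = xhi Q \/ snd w = ylo Q \/ snd w = yhi Q).

Definition subrect (P Q : rect) : Prop :=
  xlo Q <= xlo P /\ xhi P <= xhi Q /\ ylo Q <= ylo P /\ yhi P <= yhi Q.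

Definition width (Q : rect) : R := xhi Q - xlo Q.
Definition height (Q : rect) : R := yhi Q - ylo Q.
Definition square (s : R) : rect := Rect (- s) s (- s) s.

(* The contour integral along the counterclockwise boundary of [Q]: [dz = dx] on horizontal
   sides and [dz = i dy] on vertical ones. *)
Definition rect_int (f : C -> C) (Q : rect) : C :=
  (CRInt (fun x => f (x, ylo Q)) (xlo Q) (xhi Q)
   + Ci * CRInt (fun y => f (xhi Q, y)) (ylo Q) (yhi Q)
   - CRInt (fun x => f (x, yhi Q)) (xlo Q) (xhi Q)
   - Ci * CRInt (fun y => f (xlo Q, y)) (ylo Q) (yhi Q))%C.

Definition sides_integrable (f : C -> C) (Q : rect) : Prop :=
  ex_CRInt (fun x => f (x, ylo Q)) (xlo Q) (xhi Q) /\
  ex_CRInt (fun x => f (x, yhi Q)) (xlo Q) (xhi Q) /\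
  ex_CRInt (fun y => f (xlo Q, y)) (ylo Q) (yhi Q) /\
  ex_CRInt (fun y => f (xhi Q, y)) (ylo Q) (yhi Q).

Local Ltac rect_arith :=
  unfold rect_wf, subrect, on_rect_boundary, in_rect, square in *;
  cbn [fst snd xlo xhi ylo yhi] in *; lra.

Lemma sides_integrable_of_derive (f : C -> C) (Q : rect) : rect_wf Q ->
  (forall w, on_rect_boundary Q w -> ex_Cderive f w) -> sides_integrable f Q.
Proof.
  destruct Q as [a b c d]. unfold rect_wf, sides_integrable, on_rect_boundary, in_rect; simpl.
  intros Hwf Hf.
  repeat split;
    [apply ex_CRInt_horiz | apply ex_CRInt_horiz | apply ex_CRInt_vert | apply ex_CRInt_vert];
    try lra; intros t Ht; apply Hf; simpl; lra.
Qed.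

Lemma in_rect_Cmod_sub (Q : rect) (w z : C) : in_rect Q w -> in_rect Q z ->
  Cmod (w - z) <= width Q + height Q.
Proof.
  destruct w as [u v], z as [x y]. unfold in_rect, width, height; simpl. intros Hw Hz.
  replace ((u, v) - (x, y))%C with ((u - x, v - y) : C)
    by (unfold Cminus, Cplus, Copp; simpl; f_equal; ring).
  eapply Rle_trans; [apply Cmod_pair_le|].
  apply Rplus_le_compat; apply Rabs_le; lra.
Qed.

Lemma Cmod_square_boundary (s : R) (w : C) : 0 < s -> on_rect_boundary (square s) w ->
  s <= Cmod w <= 2 * s.
Proof.
  destruct w as [x y]. unfold on_rect_boundary, in_rect; simpl. intros Hs [[Hx Hy] Hb]. split.
  - assert (Hxy : s <= Rabs x \/ s <= Rabs y).
    { destruct Hb as [E|[E|[E|E]]]; rewrite E; [left|left|right|right];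
        rewrite ?Rabs_Ropp, Rabs_right; lra. }
    eapply Rle_trans; [|apply Rmax_Cmod]. simpl.
    destruct Hxy; eapply Rle_trans; eauto; [apply Rmax_l | apply Rmax_r].
  - eapply Rle_trans; [apply Cmod_pair_le|].
    assert (Rabs x <= s) by (apply Rabs_le; lra). assert (Rabs y <= s) by (apply Rabs_le; lra). lra.
Qed.

Lemma rect_int_split_x (f : C -> C) (Q : rect) (m : R) : xlo Q <= m <= xhi Q ->
  sides_integrable f Q ->
  rect_int f Q =
  (rect_int f (Rect (xlo Q) m (ylo Q) (yhi Q)) + rect_int f (Rect m (xhi Q) (ylo Q) (yhi Q)))%C.
Proof.
  destruct Q as [a b c d]. unfold sides_integrable, rect_int; cbn [xlo xhi ylo yhi].
  intros Hm [H1 [H2 _]]. rewrite (CRInt_Chasles _ a m b Hm H1), (CRInt_Chasles _ a m b Hm H2). ring.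
Qed.

Lemma rect_int_split_y (f : C -> C) (Q : rect) (m : R) : ylo Q <= m <= yhi Q ->
  sides_integrable f Q ->
  rect_int f Q =
  (rect_int f (Rect (xlo Q) (xhi Q) (ylo Q) m) + rect_int f (Rect (xlo Q) (xhi Q) m (yhi Q)))%C.
Proof.
  destruct Q as [a b c d]. unfold sides_integrable, rect_int; cbn [xlo xhi ylo yhi].
  intros Hm [_ [_ [H1 H2]]]. rewrite (CRInt_Chasles _ c m d Hm H1), (CRInt_Chasles _ c m d Hm H2). ring.
Qed.

Lemma sides_integrable_minus (f g : C -> C) (Q : rect) :
  sides_integrable f Q -> sides_integrable g Q -> sides_integrable (fun w => f w - g w)%C Q.
Proof.
  intros [F1 [F2 [F3 F4]]] [G1 [G2 [G3 G4]]].
  repeat split; apply (ex_RInt_minus (V := C_R_NormedModule)); assumption.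
Qed.

Lemma rect_int_minus (f g : C -> C) (Q : rect) :
  sides_integrable f Q -> sides_integrable g Q ->
  rect_int (fun w => f w - g w)%C Q = (rect_int f Q - rect_int g Q)%C.
Proof.
  intros [F1 [F2 [F3 F4]]] [G1 [G2 [G3 G4]]]. unfold rect_int.
  rewrite !CRInt_Cminus by assumption. ring.
Qed.

Lemma rect_int_Cmult (f : C -> C) (c : C) (Q : rect) : sides_integrable f Q ->
  rect_int (fun w => c * f w)%C Q = (c * rect_int f Q)%C.
Proof.
  intros [F1 [F2 [F3 F4]]]. unfold rect_int. rewrite !CRInt_Cmult by assumption. ring.
Qed.

Lemma rect_int_Cmod_le (f : C -> C) (Q : rect) (M : R) : rect_wf Q -> sides_integrable f Q ->
  (forall w, on_rect_boundary Q w -> Cmod (f w) <= M) ->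
  Cmod (rect_int f Q) <= 2 * (width Q + height Q) * M.
Proof.
  destruct Q as [a b c d].
  unfold rect_wf, sides_integrable, on_rect_boundary, in_rect, rect_int, width, height; simpl.
  intros Hwf [F1 [F2 [F3 F4]]] HM.
  assert (Cmod (CRInt (fun x => f (x, c)) a b) <= (b - a) * M)
    by (apply CRInt_Cmod_le; [lra | assumption | intros; apply HM; simpl; lra]).
  assert (Cmod (CRInt (fun x => f (x, d)) a b) <= (b - a) * M)
    by (apply CRInt_Cmod_le; [lra | assumption | intros; apply HM; simpl; lra]).
  assert (Cmod (CRInt (fun y => f (a, y)) c d) <= (d - c) * M)
    by (apply CRInt_Cmod_le; [lra | assumption | intros; apply HM; simpl; lra]).
  assert (Cmod (CRInt (fun y => f (b, y)) c d) <= (d - c) * M)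
    by (apply CRInt_Cmod_le; [lra | assumption | intros; apply HM; simpl; lra]).
  unfold Cminus. eapply Rle_trans; [apply Cmod_triangle|].
  eapply Rle_trans; [apply Rplus_le_compat_r, Cmod_triangle|].
  eapply Rle_trans; [apply Rplus_le_compat_r, Rplus_le_compat_r, Cmod_triangle|].
  rewrite !Cmod_opp, !Cmod_mult, !Cmod_Ci. lra.
Qed.

Lemma is_RInt_Raffine (a b x1 x2 : R) :
  is_RInt (V := R_NormedModule) (fun x => a + b * x) x1 x2 (a * (x2 - x1) + b * (x2 ^ 2 - x1 ^ 2) / 2).
Proof.
  replace (a * (x2 - x1) + b * (x2 ^ 2 - x1 ^ 2) / 2) with
    (minus ((fun x => a * x + b * x ^ 2 / 2) x2) ((fun x => a * x + b * x ^ 2 / 2) x1))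
    by (unfold minus, plus, opp; simpl; field).
  apply (is_RInt_derive (V := R_CompleteNormedModule) (fun x => a * x + b * x ^ 2 / 2)).
  - intros x _. auto_derive; [auto | field].
  - intros x _. apply (ex_derive_continuous (V := R_NormedModule)). auto_derive. auto.
Qed.

Lemma Ci_mult_Ci_l (z : C) : (Ci * (Ci * z) = - z)%C.
Proof. destruct z. unfold Ci, Cmult, Copp. simpl. f_equal; ring. Qed.

Section AffinePrimitive.
Variables (a b : C).

Let Phi (z : C) : C := (a * z + b * z * z / 2)%C.

Lemma is_CRInt_affine_horiz (y x1 x2 : R) :
  is_CRInt (fun x => a + b * (x, y))%C x1 x2 (Phi (x2, y) - Phi (x1, y))%C.
Proof.
  destruct a as [a1 a2], b as [b1 b2]. unfold Phi.
  replace (_ - _)%C with (((a1 - b2 * y) * (x2 - x1) + b1 * (x2 ^ 2 - x1 ^ 2) / 2,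
                           (a2 + b1 * y) * (x2 - x1) + b2 * (x2 ^ 2 - x1 ^ 2) / 2) : C)
    by (unfold Cdiv, Cinv, Cminus, Cplus, Copp, Cmult, RtoC; simpl; f_equal; field).
  apply (is_RInt_fct_extend_pair (U := R_NormedModule) (V := R_NormedModule));
    (eapply is_RInt_ext; [|apply is_RInt_Raffine]); intros x _; simpl; ring.
Qed.

Lemma is_CRInt_affine_vert (x y1 y2 : R) :
  is_CRInt (fun y => a + b * (x, y))%C y1 y2 (Ci * (Phi (x, y1) - Phi (x, y2)))%C.
Proof.
  destruct a as [a1 a2], b as [b1 b2]. unfold Phi.
  replace (Ci * _)%C with (((a1 + b1 * x) * (y2 - y1) + (- b2) * (y2 ^ 2 - y1 ^ 2) / 2,
                            (a2 + b2 * x) * (y2 - y1) + b1 * (y2 ^ 2 - y1 ^ 2) / 2) : C)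
    by (unfold Ci, Cdiv, Cinv, Cminus, Cplus, Copp, Cmult, RtoC; simpl; f_equal; field).
  apply (is_RInt_fct_extend_pair (U := R_NormedModule) (V := R_NormedModule));
    (eapply is_RInt_ext; [|apply is_RInt_Raffine]); intros t _; simpl; ring.
Qed.

Lemma sides_integrable_affine (Q : rect) : sides_integrable (fun w => a + b * w)%C Q.
Proof.
  repeat split; eexists; [apply is_CRInt_affine_horiz | apply is_CRInt_affine_horiz
                         | apply is_CRInt_affine_vert | apply is_CRInt_affine_vert].
Qed.

Lemma rect_int_affine (Q : rect) : rect_int (fun w => a + b * w)%C Q = 0%C.
Proof.
  unfold rect_int.
  rewrite !(is_RInt_unique (V := C_R_CompleteNormedModule) _ _ _ _ (is_CRInt_affine_horiz _ _ _)).
  rewrite !(is_RInt_unique (V := C_R_CompleteNormedModule) _ _ _ _ (is_CRInt_affine_vert _ _ _)).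
  rewrite !Ci_mult_Ci_l. ring.
Qed.

End AffinePrimitive.

(** * Goursat's theorem *)

Lemma rect_int_near_derive (f : C -> C) (Q : rect) (z l : C) (eps del : R) :
  0 < eps -> rect_wf Q -> sides_integrable f Q -> in_rect Q z -> width Q + height Q < del ->
  (forall w, Cmod (w - z) < del -> Cmod (f w - f z - l * (w - z)) <= eps * Cmod (w - z)) ->
  Cmod (rect_int f Q) <= 2 * eps * (width Q + height Q) ^ 2.
Proof.
  intros Heps Hwf Hf Hz Hdel Hl.
  set (g := fun w => (f w - (f z - l * z + l * w))%C).
  assert (Hg : rect_int f Q = rect_int g Q).
  { unfold g. rewrite rect_int_minus, rect_int_affine; auto using sides_integrable_affine. ring. }
  rewrite Hg.
  replace (2 * eps * (width Q + height Q) ^ 2)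
    with (2 * (width Q + height Q) * (eps * (width Q + height Q))) by ring.
  apply rect_int_Cmod_le;
    [exact Hwf | apply sides_integrable_minus; auto using sides_integrable_affine |].
  intros w [Hw _]. pose proof (in_rect_Cmod_sub Q w z Hw Hz) as Hwz.
  unfold g. replace (f w - (f z - l * z + l * w))%C with (f w - f z - l * (w - z))%C by ring.
  eapply Rle_trans; [apply Hl; lra|]. apply Rmult_le_compat_l; lra.
Qed.

Definition quarter (Q : rect) (right top : bool) : rect :=
  let xm := (xlo Q + xhi Q) / 2 in
  let ym := (ylo Q + yhi Q) / 2 in
  Rect (if right then xm else xlo Q) (if right then xhi Q else xm)
       (if top then ym else ylo Q) (if top then yhi Q else ym).

Lemma quarter_spec (Q : rect) (right top : bool) : rect_wf Q ->
  rect_wf (quarter Q right top) /\ subrect (quarter Q right top) Q /\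
  width (quarter Q right top) = width Q / 2 /\ height (quarter Q right top) = height Q / 2.
Proof.
  destruct Q, right, top; unfold rect_wf, subrect, width, height, quarter; simpl; intros; lra.
Qed.

Lemma rect_int_quarters (f : C -> C) (Q : rect) : rect_wf Q ->
  (forall w, in_rect Q w -> ex_Cderive f w) ->
  rect_int f Q = (rect_int f (quarter Q false false) + rect_int f (quarter Q true false)
                  + rect_int f (quarter Q false true) + rect_int f (quarter Q true true))%C.
Proof.
  intros Hwf Hf.
  assert (Hint : forall P, rect_wf P -> subrect P Q -> sides_integrable f P).
  { intros P HP HPQ. apply sides_integrable_of_derive; [exact HP|].
    intros w [Hw _]. apply Hf. unfold in_rect, subrect in *; lra. }
  destruct Q as [a b c d]. unfold rect_wf in Hwf; simpl in Hwf. unfold quarter; simpl.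
  rewrite (rect_int_split_y f _ ((c + d) / 2)), (rect_int_split_x f (Rect a b c _) ((a + b) / 2)),
          (rect_int_split_x f (Rect a b _ d) ((a + b) / 2));
    simpl; try lra; try (apply Hint; unfold rect_wf, subrect; simpl; lra).
  ring.
Qed.

(* By [rect_int_quarters], the last quarter qualifies whenever the first three do not. *)
Definition bisect_step (f : C -> C) (Q : rect) : rect :=
  let large P := Rle_dec (Cmod (rect_int f Q)) (4 * Cmod (rect_int f P)) in
  if large (quarter Q false false) then quarter Q false false
  else if large (quarter Q true false) then quarter Q true false
  else if large (quarter Q false true) then quarter Q false true
  else quarter Q true true.

Lemma bisect_step_spec (f : C -> C) (Q : rect) : rect_wf Q ->
  (forall w, in_rect Q w -> ex_Cderive f w) ->
  (exists right top, bisect_step f Q = quarter Q right top) /\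
  Cmod (rect_int f Q) <= 4 * Cmod (rect_int f (bisect_step f Q)).
Proof.
  intros Hwf Hf.
  assert (Htri : Cmod (rect_int f Q) <=
    Cmod (rect_int f (quarter Q false false)) + Cmod (rect_int f (quarter Q true false))
    + Cmod (rect_int f (quarter Q false true)) + Cmod (rect_int f (quarter Q true true))).
  { rewrite (rect_int_quarters f Q Hwf Hf) at 1.
    eapply Rle_trans; [apply Cmod_triangle|]. apply Rplus_le_compat_r.
    eapply Rle_trans; [apply Cmod_triangle|]. apply Rplus_le_compat_r. apply Cmod_triangle. }
  unfold bisect_step; cbv zeta.
  repeat (destruct (Rle_dec _ _); [split; [eexists _, _; reflexivity | assumption] |]).
  split; [eexists _, _; reflexivity | lra].
Qed.

Lemma nested_intervals (a b : nat -> R) :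
  (forall m k, a m <= b k) -> exists x, forall k, a k <= x <= b k.
Proof.
  intros H.
  destruct (completeness (fun x => exists k, x = a k)) as [l [Hub Hlub]].
  - exists (b 0%nat). intros x [k ->]. apply H.
  - exists (a 0%nat), 0%nat. reflexivity.
  - exists l. intros k. split.
    + apply Hub. exists k. reflexivity.
    + apply Hlub. intros x [m ->]. apply H.
Qed.

Lemma exists_pow2_lt (K del : R) : 0 < del -> exists k, K / 2 ^ k < del.
Proof.
  intros Hdel. pose proof (Rabs_pos K) as HK.
  destruct (pow_lt_1_zero (/ 2) ltac:(rewrite Rabs_right; lra) (del / (Rabs K + 1)))
    as [k Hk]; [apply Rdiv_lt_0_compat; lra|].
  exists k. specialize (Hk k (Nat.le_refl k)).
  rewrite pow_inv, Rabs_right in Hk by (left; apply Rinv_0_lt_compat, pow_lt; lra).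
  assert (0 < / 2 ^ k) by (apply Rinv_0_lt_compat, pow_lt; lra).
  apply Rmult_lt_compat_l with (r := Rabs K + 1) in Hk; [|lra].
  replace ((Rabs K + 1) * (del / (Rabs K + 1))) with del in Hk by (field; lra).
  pose proof (Rle_abs K). unfold Rdiv. nra.
Qed.

Lemma C_eq_0_of_Cmod_le (z : C) : (forall eps, 0 < eps -> Cmod z <= eps) -> z = 0%C.
Proof.
  intros H. apply Cmod_eq_0, Rle_antisym; [|apply Cmod_ge_0].
  apply Rle_plus_epsilon. intros eps Heps. rewrite Rplus_0_l. exact (H eps Heps).
Qed.

Section Goursat.

Variables (f : C -> C) (Q0 : rect).
Hypothesis Q0_wf : rect_wf Q0.
Hypothesis f_derive : forall w, in_rect Q0 w -> ex_Cderive f w.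

Let Qk (k : nat) : rect := Nat.iter k (bisect_step f) Q0.

Let derive_on_subrect (P : rect) : subrect P Q0 -> forall w, in_rect P w -> ex_Cderive f w.
Proof. intros HP w Hw. apply f_derive. unfold in_rect, subrect in *; lra. Qed.

Lemma bisect_spec (k : nat) :
  rect_wf (Qk k) /\ subrect (Qk k) Q0 /\ width (Qk k) = width Q0 / 2 ^ k /\
  height (Qk k) = height Q0 / 2 ^ k /\ Cmod (rect_int f Q0) <= 4 ^ k * Cmod (rect_int f (Qk k)).
Proof.
  induction k as [|k (Hwf & Hsub & Hw & Hh & HB)].
  - unfold Qk; simpl. unfold subrect, rect_wf in *. repeat split; lra.
  - change (Qk (S k)) with (bisect_step f (Qk k)).
    destruct (bisect_step_spec f (Qk k) Hwf (derive_on_subrect _ Hsub)) as [[right [top E]] Hstep].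
    rewrite E in *. destruct (quarter_spec (Qk k) right top Hwf) as (Hwf' & Hsub' & Hw' & Hh').
    assert (0 <= 4 ^ k) by (apply pow_le; lra).
    rewrite Hw', Hh', Hw, Hh. change (4 ^ S k) with (4 * 4 ^ k). change (2 ^ S k) with (2 * 2 ^ k).
    unfold subrect, rect_wf in *.
    repeat split; try lra; try (field; apply pow_nonzero; lra).
    nra.
Qed.

Lemma bisect_nested (k j : nat) : subrect (Qk (j + k)) (Qk k).
Proof.
  induction j as [|j IH]; [unfold subrect; simpl; lra|].
  destruct (bisect_spec (j + k)) as (Hwf & Hsub & _).
  destruct (bisect_step_spec f _ Hwf (derive_on_subrect _ Hsub)) as [[right [top E]] _].
  change (Qk (S j + k)) with (bisect_step f (Qk (j + k))). rewrite E.
  destruct (quarter_spec (Qk (j + k)) right top Hwf) as (_ & Hq & _).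
  unfold subrect in *; lra.
Qed.

Lemma bisect_common_point : exists z, forall k, in_rect (Qk k) z.
Proof.
  assert (Hcross : forall m k, xlo (Qk m) <= xhi (Qk k) /\ ylo (Qk m) <= yhi (Qk k)).
  { intros m k.
    pose proof (bisect_nested m (Nat.max m k - m)) as Hm.
    pose proof (bisect_nested k (Nat.max m k - k)) as Hk.
    replace (Nat.max m k - m + m)%nat with (Nat.max m k) in Hm by lia.
    replace (Nat.max m k - k + k)%nat with (Nat.max m k) in Hk by lia.
    destruct (bisect_spec (Nat.max m k)) as (Hwf & _).
    unfold subrect, rect_wf in *; lra. }
  destruct (nested_intervals (fun k => xlo (Qk k)) (fun k => xhi (Qk k))) as [x Hx];
    [intros; apply Hcross|].
  destruct (nested_intervals (fun k => ylo (Qk k)) (fun k => yhi (Qk k))) as [y Hy];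
    [intros; apply Hcross|].
  exists (x, y). intros k. split; [apply Hx | apply Hy].
Qed.

Theorem rect_int_goursat : rect_int f Q0 = 0%C.
Proof.
  destruct bisect_common_point as [z Hz].
  destruct (f_derive z (Hz 0%nat)) as [l Hl].
  apply C_eq_0_of_Cmod_le. intros eps Heps.
  set (K := width Q0 + height Q0).
  set (eps' := eps / (2 * K ^ 2 + 1)).
  assert (Heps' : 0 < eps') by (apply Rdiv_lt_0_compat; [lra | pose proof (pow2_ge_0 K); lra]).
  destruct (proj1 (is_Cderive_eps f z l) Hl eps' Heps') as [del [Hdel Hl']].
  destruct (exists_pow2_lt K del Hdel) as [k Hk].
  destruct (bisect_spec k) as (Hwf & Hsub & Hw & Hh & HB).
  assert (HK : width (Qk k) + height (Qk k) = K / 2 ^ k)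
    by (rewrite Hw, Hh; unfold K; field; apply pow_nonzero; lra).
  pose proof (rect_int_near_derive f (Qk k) z l eps' del Heps' Hwf) as Hsmall.
  rewrite HK in Hsmall.
  specialize (Hsmall (sides_integrable_of_derive f _ Hwf
                        (fun w Hw => derive_on_subrect _ Hsub w (proj1 Hw))) (Hz k) Hk Hl').
  eapply Rle_trans; [exact HB|].
  apply Rle_trans with (4 ^ k * (2 * eps' * (K / 2 ^ k) ^ 2));
    [apply Rmult_le_compat_l; [apply pow_le; lra | exact Hsmall] |].
  replace (4 ^ k * (2 * eps' * (K / 2 ^ k) ^ 2)) with (eps * (2 * K ^ 2 / (2 * K ^ 2 + 1))).
  - pose proof (pow2_ge_0 K). unfold Rdiv.
    assert (0 < / (2 * K ^ 2 + 1)) by (apply Rinv_0_lt_compat; lra).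
    assert ((2 * K ^ 2 + 1) * / (2 * K ^ 2 + 1) = 1) by (field; lra).
    nra.
  - replace 4 with (2 * 2) by ring. rewrite Rpow_mult_distr. unfold eps'.
    field. split; [apply pow_nonzero; lra | pose proof (pow2_ge_0 K); lra].
Qed.

End Goursat.

(** * The Cauchy estimate on a square *)

Lemma C_pair_neq_0 (x y : R) : x <> 0 \/ y <> 0 -> ((x, y) : C) <> 0%C.
Proof. intros H E. injection E. lra. Qed.

Lemma rect_int_square_shrink (f : C -> C) (S s : R) : 0 < s < S ->
  (forall w, in_rect (square S) w -> w <> 0%C -> ex_Cderive f w) ->
  rect_int f (square S) = rect_int f (square s).
Proof.
  intros Hs Hf.
  assert (Hint : forall P, rect_wf P -> subrect P (square S) ->
            (forall x y, on_rect_boundary P (x, y) -> x <> 0 \/ y <> 0) -> sides_integrable f P).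
  { intros P HP HPS H0. apply sides_integrable_of_derive; [exact HP|].
    intros [x y] Hw. apply Hf; [rect_arith | exact (C_pair_neq_0 x y (H0 x y Hw))]. }
  assert (Hzero : forall P, rect_wf P -> subrect P (square S) ->
            (forall x y, in_rect P (x, y) -> x <> 0 \/ y <> 0) -> rect_int f P = 0%C).
  { intros P HP HPS H0. apply rect_int_goursat; [exact HP|].
    intros [x y] Hw. apply Hf; [rect_arith | exact (C_pair_neq_0 x y (H0 x y Hw))]. }
  (* Cut [square S] into [square s] and four rectangles of the frame, none containing [0]. *)
  unfold square.
  rewrite (rect_int_split_y f _ (- s)), (rect_int_split_y f (Rect _ _ (- s) _) s),
    (rect_int_split_x f (Rect _ _ (- s) s) (- s)), (rect_int_split_x f (Rect (- s) _ (- s) s) s);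
    cbn [xlo xhi ylo yhi];
    try first [rect_arith | apply Hint; try intros x y; rect_arith].
  rewrite (Hzero (Rect (- S) S (- S) (- s))), (Hzero (Rect (- S) S s S)),
    (Hzero (Rect (- S) (- s) (- s) s)), (Hzero (Rect s S (- s) s));
    try (ring || (try intros x y; rect_arith)).
Qed.

Lemma square_boundary_neq_0 (s : R) (w : C) : 0 < s -> on_rect_boundary (square s) w -> w <> 0%C.
Proof.
  intros Hs Hw E. pose proof (Cmod_square_boundary s w Hs Hw) as Hb. rewrite E, Cmod_0 in Hb. lra.
Qed.

Lemma sides_integrable_square (g : C -> C) (s S : R) : 0 < s <= S ->
  (forall w, in_rect (square S) w -> w <> 0%C -> ex_Cderive g w) -> sides_integrable g (square s).
Proof.
  intros Hs Hg. apply sides_integrable_of_derive; [rect_arith|]. intros w Hw.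
  apply Hg; [destruct Hw as [Hw _]; rect_arith | apply (square_boundary_neq_0 s); [lra | exact Hw]].
Qed.

Lemma rect_int_square (f : C -> C) (s : R) : sides_integrable f (square s) ->
  rect_int f (square s) =
  CRInt (fun t => f (t, (- s)%R) + Ci * f (s, t) - f (t, s) - Ci * f ((- s)%R, t))%C (- s) s.
Proof.
  intros [H1 [H2 [H3 H4]]]. unfold rect_int, square in *; cbn [xlo xhi ylo yhi] in *.
  symmetry. apply (is_RInt_unique (V := C_R_CompleteNormedModule)).
  exact (is_RInt_minus _ _ _ _ _ _
           (is_RInt_minus _ _ _ _ _ _
              (is_RInt_plus _ _ _ _ _ _ (RInt_correct _ _ _ H1)
                 (is_CRInt_Cmult _ _ _ _ Ci (RInt_correct _ _ _ H4)))
              (RInt_correct _ _ _ H2))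
           (is_CRInt_Cmult _ _ _ _ Ci (RInt_correct _ _ _ H3))).
Qed.

Lemma Cinv_square_sides (S t : R) : 0 < S ->
  (/ (t, (- S)%R) + Ci * / (S, t) - / (t, S) - Ci * / ((- S)%R, t))%C = (0, 4 * S / (t ^ 2 + S ^ 2)).
Proof.
  intros HS. assert (0 < t ^ 2 + S ^ 2) by nra.
  unfold Cinv, Cmult, Cplus, Cminus, Copp, Ci. simpl. unfold Cplus. simpl. f_equal; field; nra.
Qed.

Lemma RInt_inv_square_sides (S : R) : 0 < S ->
  ex_RInt (fun t => 4 * S / (t ^ 2 + S ^ 2)) (- S) S /\
  4 <= RInt (fun t => 4 * S / (t ^ 2 + S ^ 2)) (- S) S.
Proof.
  intros HS.
  assert (Hex : ex_RInt (fun t => 4 * S / (t ^ 2 + S ^ 2)) (- S) S).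
  { apply (ex_RInt_continuous (V := R_CompleteNormedModule)). intros t _.
    apply (ex_derive_continuous (V := R_NormedModule)). auto_derive. nra. }
  split; [exact Hex|].
  apply Rle_trans with (RInt (fun _ => 2 / S) (- S) S).
  - rewrite RInt_const. unfold scal; simpl. unfold mult; simpl. right. field. lra.
  - apply RInt_le; [lra | apply ex_RInt_const | exact Hex |].
    intros t Ht. assert (0 < t ^ 2 + S ^ 2) by nra.
    apply Rmult_le_reg_r with (S * (t ^ 2 + S ^ 2)); [nra|].
    replace (2 / S * (S * (t ^ 2 + S ^ 2))) with (2 * (t ^ 2 + S ^ 2)) by (field; lra).
    replace (4 * S / (t ^ 2 + S ^ 2) * (S * (t ^ 2 + S ^ 2))) with (4 * S * S) by (field; lra).
    nra.
Qed.

Lemma rect_int_inv_square (S : R) : 0 < S ->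
  sides_integrable (fun w => / w)%C (square S) /\ 4 <= Cmod (rect_int (fun w => / w)%C (square S)).
Proof.
  intros HS.
  assert (Hint : sides_integrable (fun w => / w)%C (square S))
    by (apply (sides_integrable_square _ S S); [lra | intros w _ H0; eexists; apply is_derive_Cinv, H0]).
  split; [exact Hint|].
  destruct (RInt_inv_square_sides S HS) as [Hex Hge].
  rewrite rect_int_square by exact Hint.
  rewrite (RInt_ext (V := C_R_CompleteNormedModule) _ (fun t => (0, 4 * S / (t ^ 2 + S ^ 2)) : C))
    by (intros; apply Cinv_square_sides, HS).
  pose proof (is_RInt_const (V := R_NormedModule) (- S) S 0) as Hzero.
  rewrite (scal_zero_r (V := R_NormedModule)) in Hzero.
  rewrite (is_RInt_unique (V := C_R_CompleteNormedModule) _ _ _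
             (0, RInt (fun t => 4 * S / (t ^ 2 + S ^ 2)) (- S) S))
    by exact (is_RInt_fct_extend_pair (U := R_NormedModule) (V := R_NormedModule)
                (fun t => (0, 4 * S / (t ^ 2 + S ^ 2))) _ _ _ _ Hzero (RInt_correct _ _ _ Hex)).
  eapply Rle_trans; [|apply Rmax_Cmod]. eapply Rle_trans; [|apply Rmax_r].
  eapply Rle_trans; [exact Hge | apply Rle_abs].
Qed.

Section CauchyEstimate.

Variables (f : C -> C) (d : C) (S M : R).
Hypothesis S_pos : 0 < S.
Hypothesis f_derive : forall w, in_rect (square S) w -> ex_Cderive f w.
Hypothesis f_bound : forall w, in_rect (square S) w -> Cmod (f w) <= M.
Hypothesis f_0 : f 0%C = 0%C.
Hypothesis f_derive_0 : is_Cderive f (RtoC 0) d.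

Let quot (w : C) : C := (f w * (/ w * / w))%C.
Let pole (w : C) : C := (d * / w)%C.

Let quot_derive (w : C) : in_rect (square S) w -> w <> 0%C -> ex_Cderive quot w.
Proof.
  intros Hw H0. destruct (f_derive w Hw) as [df Hdf]. eexists.
  apply (is_derive_Cmult f (fun w => / w * / w)%C); [exact Hdf|].
  apply (is_derive_Cmult (fun w => / w) (fun w => / w))%C; apply is_derive_Cinv, H0.
Qed.

Let pole_derive (w : C) : w <> 0%C -> ex_Cderive pole w.
Proof.
  intros H0. eexists. apply (is_derive_Cmult (fun _ => d) (fun w => / w)%C);
    [apply is_derive_const | apply is_derive_Cinv, H0].
Qed.

Lemma rect_int_quot_pole : rect_int quot (square S) = rect_int pole (square S).
Proof.
  assert (Hh : forall w, in_rect (square S) w -> w <> 0%C ->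
                 ex_Cderive (fun w : C => quot w - pole w)%C w).
  { intros w Hw H0. destruct (quot_derive w Hw H0) as [l1 H1], (pole_derive w H0) as [l2 H2].
    eexists. exact (is_derive_minus quot pole w l1 l2 H1 H2). }
  (* [quot - pole] is [(f w - f 0 - d w) / w^2 = o(1/|w|)], so it integrates to [o(1)]
     over small squares. *)
  assert (Hsmall : rect_int (fun w => quot w - pole w)%C (square S) = 0%C).
  { apply C_eq_0_of_Cmod_le. intros eps Heps.
    destruct (proj1 (is_Cderive_eps f (RtoC 0) d) f_derive_0 (eps / 8)) as [del [Hdel Hd]]; [lra|].
    set (s := Rmin (S / 2) (del / 4)).
    assert (Hs : 0 < s < S) by (split; [apply Rmin_pos | eapply Rle_lt_trans; [apply Rmin_l|]]; lra).
    assert (Hsdel : s <= del / 4) by apply Rmin_r.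
    rewrite (rect_int_square_shrink _ S s Hs Hh).
    replace eps with (2 * (width (square s) + height (square s)) * (eps / 8 / s))
      by (unfold width, height, square; cbn [xlo xhi ylo yhi]; field; lra).
    apply rect_int_Cmod_le; [rect_arith | apply (sides_integrable_square _ s S); [lra | exact Hh] |].
    intros w Hw. destruct (Cmod_square_boundary s w (proj1 Hs) Hw) as [Hw1 Hw2].
    assert (H0 : w <> 0%C) by (apply (square_boundary_neq_0 s); [lra | exact Hw]).
    assert (Hw0 : (w - 0)%C = w) by ring. specialize (Hd w). rewrite f_0, Hw0 in Hd.
    replace (quot w - pole w)%C with ((f w - 0 - d * w) * (/ w * / w))%C
      by (unfold quot, pole; field; exact H0).
    rewrite !Cmod_mult, !Cmod_inv by exact H0.
    assert (0 < / Cmod w) by (apply Rinv_0_lt_compat; lra).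
    apply Rle_trans with (eps / 8 * Cmod w * (/ Cmod w * / Cmod w));
      [apply Rmult_le_compat_r; [nra | apply Hd; lra] |].
    replace (eps / 8 * Cmod w * (/ Cmod w * / Cmod w)) with (eps / 8 * / Cmod w) by (field; lra).
    apply Rmult_le_compat_l; [lra | apply Rinv_le_contravar; lra]. }
  rewrite rect_int_minus in Hsmall by (apply (sides_integrable_square _ S S);
    [lra | first [exact quot_derive | exact (fun w _ H0 => pole_derive w H0)]]).
  apply Ceq_minus, Hsmall.
Qed.

Lemma Cmod_Cderive_le_square : Cmod d <= 2 * M / S.
Proof.
  destruct (rect_int_inv_square S S_pos) as [Hinv Hge].
  assert (HM : 0 <= M).
  { rewrite <- Cmod_0, <- f_0. apply f_bound. unfold in_rect, square; simpl; lra. }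
  assert (Hquot : Cmod (rect_int quot (square S))
                  <= 2 * (width (square S) + height (square S)) * (M / S ^ 2)).
  { apply rect_int_Cmod_le;
      [rect_arith | apply (sides_integrable_square _ S S); [lra | exact quot_derive] |].
    intros w Hw. destruct (Cmod_square_boundary S w S_pos Hw) as [Hw1 _].
    assert (H0 : w <> 0%C) by (apply (square_boundary_neq_0 S); [lra | exact Hw]).
    unfold quot. rewrite !Cmod_mult, !Cmod_inv by exact H0.
    assert (/ Cmod w <= / S) by (apply Rinv_le_contravar; lra).
    assert (0 < / Cmod w) by (apply Rinv_0_lt_compat; lra).
    replace (M / S ^ 2) with (M * (/ S * / S)) by (field; lra).
    apply Rmult_le_compat; [apply Cmod_ge_0 | nra | apply f_bound; destruct Hw; assumption |].
    apply Rmult_le_compat; lra. }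
  rewrite rect_int_quot_pole in Hquot. unfold pole in Hquot.
  rewrite (rect_int_Cmult _ _ _ Hinv), Cmod_mult in Hquot.
  unfold width, height, square in Hquot; cbn [xlo xhi ylo yhi] in Hquot.
  apply Rmult_le_reg_r with 4; [lra|].
  replace (2 * M / S * 4) with (2 * (S - - S + (S - - S)) * (M / S ^ 2)) by (field; lra).
  eapply Rle_trans; [|exact Hquot]. apply Rmult_le_compat_l; [apply Cmod_ge_0 | exact Hge].
Qed.

End CauchyEstimate.

(** * Schwarz's bound and the annulus *)

Lemma pow_le_1_of_bounded (a M : R) : 0 <= a -> (forall k, a ^ k <= M) -> a <= 1.
Proof.
  intros Ha H. apply Rnot_lt_le. intros Ha1.
  destruct (Pow_x_infinity a ltac:(rewrite Rabs_right; lra) (M + 1)) as [N HN].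
  specialize (HN N (Nat.le_refl N)). specialize (H N).
  rewrite Rabs_right in HN by (apply Rle_ge, pow_le; lra). lra.
Qed.

Lemma in_square_unit_disc (w : C) : in_rect (square (2 / 5)) w -> unit_disc w.
Proof.
  destruct w as [x y]. unfold in_rect, square, unit_disc; cbn [fst snd xlo xhi ylo yhi]. intros [Hx Hy].
  eapply Rle_lt_trans; [apply Cmod_pair_le|].
  assert (Rabs x <= 2 / 5) by (apply Rabs_le; lra).
  assert (Rabs y <= 2 / 5) by (apply Rabs_le; lra). lra.
Qed.

Section DiscSelfMap.

Variables (F : C -> C) (lam : C).
Hypothesis F_holo : holomorphic_on unit_disc F.
Hypothesis F_disc : forall z, unit_disc z -> unit_disc (F z).
Hypothesis F_0 : F (RtoC 0) = RtoC 0.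
Hypothesis F_derive_0 : is_Cderive F (RtoC 0) lam.

Lemma iter_selfmap (k : nat) :
  (forall z, unit_disc z -> unit_disc (Nat.iter k F z)) /\ holomorphic_on unit_disc (Nat.iter k F) /\
  Nat.iter k F (RtoC 0) = RtoC 0 /\ is_Cderive (Nat.iter k F) (RtoC 0) (lam ^ k)%C.
Proof.
  induction k as [|k (IH_disc & IH_holo & IH_0 & IH_d)]; simpl.
  - split; [auto|]. split; [intros z _; eexists; apply is_derive_Cid|].
    split; [reflexivity | apply is_derive_Cid].
  - split; [|split; [|split]].
    + intros z Hz. apply F_disc, IH_disc, Hz.
    + intros z Hz. destruct (IH_holo z Hz) as [dk Hdk], (F_holo _ (IH_disc z Hz)) as [dF HdF].
      eexists. exact (is_derive_Ccomp F (Nat.iter k F) z dF dk HdF Hdk).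
    + rewrite IH_0. exact F_0.
    + replace (lam * lam ^ k)%C with (lam ^ k * lam)%C by ring.
      rewrite <- IH_0 in F_derive_0.
      exact (is_derive_Ccomp F (Nat.iter k F) _ lam _ F_derive_0 IH_d).
Qed.

Theorem selfmap_derive_le_1 : Cmod lam <= 1.
Proof.
  apply (pow_le_1_of_bounded _ 5); [apply Cmod_ge_0|]. intros k.
  destruct (iter_selfmap k) as (Hk_disc & Hk_holo & Hk_0 & Hk_d).
  rewrite <- Cmod_pow. replace 5 with (2 * 1 / (2 / 5)) by field.
  apply (Cmod_Cderive_le_square (Nat.iter k F) _ (2 / 5) 1); [lra | | | exact Hk_0 | exact Hk_d].
  - intros w Hw. apply Hk_holo, in_square_unit_disc, Hw.
  - intros w Hw. left. apply Hk_disc, in_square_unit_disc, Hw.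
Qed.

End DiscSelfMap.

Lemma pow_lt_pow_l (a b : R) (n : nat) : 0 <= a < b -> (0 < n)%nat -> a ^ n < b ^ n.
Proof.
  intros Hab Hn. destruct n as [|m]; [lia|]. simpl.
  assert (a ^ m <= b ^ m) by (apply pow_incr; lra).
  assert (0 < b ^ m) by (apply pow_lt; lra).
  assert (0 <= a ^ m) by (apply pow_le; lra). nra.
Qed.

Lemma Cmod_affine_bounds (r : R) (w : C) : 1 < r -> Cmod w < 1 ->
  / r < Cmod (1 + RtoC (1 - / r) * w) < r.
Proof.
  intros Hr Hw. pose proof (Cmod_ge_0 w).
  assert (Hir : 0 < / r < 1)
    by (split; [apply Rinv_0_lt_compat | rewrite <- Rinv_1; apply Rinv_lt_contravar]; lra).
  assert (Hrho : Cmod (RtoC (1 - / r) * w) = (1 - / r) * Cmod w)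
    by (rewrite Cmod_mult, Cmod_R, Rabs_right; lra).
  assert (Hr2 : 2 - / r <= r).
  { apply Rmult_le_reg_r with r; [lra|].
    replace ((2 - / r) * r) with (2 * r - 1) by (field; lra). nra. }
  split.
  - pose proof (Cmod_triangle (1 + RtoC (1 - / r) * w) (- (RtoC (1 - / r) * w))) as T.
    replace (1 + RtoC (1 - / r) * w + - (RtoC (1 - / r) * w))%C with (RtoC 1) in T by ring.
    rewrite Cmod_opp, Cmod_R, Rabs_R1 in T. nra.
  - eapply Rle_lt_trans; [apply Cmod_triangle|]. rewrite Cmod_R, Rabs_R1. nra.
Qed.

Lemma annulus_affine_pow (r : R) (n : nat) (w : C) : 1 < r -> (0 < n)%nat -> Cmod w < 1 ->
  annulus (r ^ n) ((1 + RtoC (1 - / r) * w) ^ n)%C.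
Proof.
  intros Hr Hn Hw. destruct (Cmod_affine_bounds r w Hr Hw) as [Hlo Hhi].
  assert (0 < / r) by (apply Rinv_0_lt_compat; lra).
  unfold annulus. rewrite Cmod_pow, <- pow_inv. split; apply pow_lt_pow_l; auto; lra.
Qed.

Lemma carath_value_le (r : R) (n : nat) (x : R) : 1 < r -> (0 < n)%nat ->
  carath_values (r ^ n) x -> x <= / INR n * (r / (r - 1)).
Proof.
  intros Hr Hn [g [d (Hg_holo & Hg_map & Hg_1 & Hg_d & ->)]].
  destruct n as [|m]; [lia|].
  set (rho := 1 - / r).
  assert (Hrho : 0 < rho)
    by (unfold rho; assert (/ r < 1) by (rewrite <- Rinv_1; apply Rinv_lt_contravar; lra); lra).
  set (P := fun w => ((1 + RtoC rho * w) ^ S m)%C).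
  assert (HP_ann : forall w, unit_disc w -> annulus (r ^ S m) (P w))
    by (intros w Hw; apply annulus_affine_pow; [lra | lia | exact Hw]).
  assert (HP_d : forall w, is_Cderive P w (rho * (INR (S m) * (1 + rho * w) ^ m))%C)
    by (intros w; apply (is_derive_Ccomp (fun u => u ^ S m)%C);
        [apply is_derive_Cpow_S | apply is_derive_Caffine]).
  assert (HP_0 : P (RtoC 0) = RtoC 1)
    by (unfold P; replace (1 + rho * 0)%C with (RtoC 1) by ring; apply Cpow_1_l).
  set (F := fun w => g (P w)).
  assert (HF_d0 : is_Cderive F (RtoC 0) (RtoC (rho * INR (S m)) * d)%C).
  { rewrite <- HP_0 in Hg_d.
    replace (RtoC (rho * INR (S m))) with (rho * (INR (S m) * (1 + rho * 0) ^ m))%C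
      by (replace (1 + rho * 0)%C with (RtoC 1) by ring; rewrite Cpow_1_l, RtoC_mult; ring).
    exact (is_derive_Ccomp g P _ d _ Hg_d (HP_d (RtoC 0))). }
  assert (Hlam : Cmod (RtoC (rho * INR (S m)) * d)%C <= 1).
  { apply (selfmap_derive_le_1 F); [| | unfold F; rewrite HP_0; exact Hg_1 | exact HF_d0].
    - intros w Hw. destruct (Hg_holo (P w) (HP_ann w Hw)) as [dg Hdg].
      eexists. exact (is_derive_Ccomp g P w dg _ Hdg (HP_d w)).
    - intros w Hw. apply Hg_map, HP_ann, Hw. }
  assert (HnR : 0 < INR (S m)) by (apply lt_0_INR; lia).
  rewrite Cmod_mult, Cmod_R, Rabs_right in Hlam by nra.
  replace (/ INR (S m) * (r / (r - 1))) with (1 / (rho * INR (S m))) by (unfold rho; field; lra).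
  apply Rmult_le_reg_l with (rho * INR (S m)); [nra|].
  replace (rho * INR (S m) * (1 / (rho * INR (S m)))) with 1 by (field; lra). exact Hlam.
Qed.

Theorem lemma3 (r : R) (n : nat) (hr : 1 < r) (hn : (0 < n)%nat) :
  Rbar_le (carath (r ^ n)) (Finite (/ INR n * (r / (r - 1)))).
Proof.
  destruct (Lub_Rbar_correct (carath_values (r ^ n))) as [_ Hlub].
  apply Hlub. intros x Hx. exact (carath_value_le r n x hr hn Hx).
Qed.
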